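(* Every leafless directed forest thinner than a forkless directed forest is forkless.
   Context: A directed forest is a pair $\mathcal{T}=(V,\mathsf{p})$ where $V$ is a nonempty set and $\mathsf{p}\colon V\to V$ satisfies: if $n\in\mathbb{N}$, $v\in V$ and $\mathsf{p}^n(v)=v$, then $\mathsf{p}(v)=v$. Roots: $\mathrm{root}(\mathcal{T})=\{v:\mathsf{p}(v)=v\}$, $V^\circ=V\setminus\mathrm{root}(\mathcal{T})$. Children: $\mathrm{Chi}(v)=\{u:\mathsf{p}(u)=v\neq u\}$, $\deg(v)=|\mathrm{Chi}(v)|$. $\mathcal{T}$ is leafless if $\mathsf{p}(V)=V$, and forkless if $\deg(v)=1$ for every $v\in V^\circ$. $(V,\mathsf{p}_1)$ is thinner than $(V,\mathsf{p}_2)$ if $\mathsf{p}_1(v)\in\{v,\mathsf{p}_2(v)\}$ for all $v\in V$. *)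

From Stdlib Require Import Arith.

Definition is_forest {V : Type} (p : V -> V) : Prop :=
  forall (n : nat) (v : V), Nat.iter (S n) p v = v -> p v = v.
(* n ranges over positive naturals: n = S n'; with n = 0 the condition would be vacuous-false *)

Definition directed_forest (V : Type) (p : V -> V) : Prop :=
  inhabited V /\ is_forest p.

Definition is_root {V : Type} (p : V -> V) (v : V) : Prop := p v = v.

Definition is_child {V : Type} (p : V -> V) (v u : V) : Prop := p u = v /\ v <> u.

Definition deg_eq_one {V : Type} (p : V -> V) (v : V) : Prop :=
  exists u, is_child p v u /\ forall w, is_child p v w -> w = u.

Definition leafless {V : Type} (p : V -> V) : Prop :=
  forall v : V, exists u : V, p u = v.

Definition forkless {V : Type} (p : V -> V) : Prop :=
  forall v : V, ~ is_root p v -> deg_eq_one p v.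

Definition thinner {V : Type} (p1 p2 : V -> V) : Prop :=
  forall v : V, p1 v = v \/ p1 v = p2 v.


(* Thinning only turns vertices into roots, so a non-root of [p1] is a
   non-root of [p2] and every [p1]-child of [v] is a [p2]-child of [v]; hence
   [v] has at most one [p1]-child, and at least one because [p1] is leafless. *)

Lemma thinner_nonroot {V : Type} (p1 p2 : V -> V) (v : V) :
  thinner p1 p2 -> ~ is_root p1 v -> ~ is_root p2 v.
Proof.
  unfold is_root; intros Ht Hv Hv2.
  destruct (Ht v) as [E | E]; congruence.
Qed.

Lemma thinner_child {V : Type} (p1 p2 : V -> V) (v u : V) :
  thinner p1 p2 -> is_child p1 v u -> is_child p2 v u.
Proof.
  intros Ht [Hu Hvu]; split; [| exact Hvu].
  destruct (Ht u) as [E | E]; congruence.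
Qed.

Lemma leafless_nonroot_child {V : Type} (p : V -> V) (v : V) :
  leafless p -> ~ is_root p v -> exists u, is_child p v u.
Proof.
  unfold is_root; intros Hl Hv.
  destruct (Hl v) as [u Hu].
  exists u; split; [exact Hu |].
  intros E; subst u; contradiction.
Qed.

Lemma deg_eq_one_sub {V : Type} (p1 p2 : V -> V) (v : V) :
  (exists u, is_child p1 v u) ->
  (forall u, is_child p1 v u -> is_child p2 v u) ->
  deg_eq_one p2 v -> deg_eq_one p1 v.
Proof.
  intros [u Hu] Hsub [c [_ Huniq]].
  exists u; split; [exact Hu |].
  intros w Hw.
  rewrite (Huniq w (Hsub w Hw)), (Huniq u (Hsub u Hu)).
  reflexivity.
Qed.

Theorem lemma5p3 (V : Type) (p1 p2 : V -> V) :
  directed_forest V p1 -> directed_forest V p2 ->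
  leafless p1 -> forkless p2 -> thinner p1 p2 ->
  forkless p1.
Proof.
  intros _ _ Hl Hf Ht v Hv.
  apply (deg_eq_one_sub p1 p2).
  - exact (leafless_nonroot_child p1 v Hl Hv).
  - intros u; exact (thinner_child p1 p2 v u Ht).
  - exact (Hf v (thinner_nonroot p1 p2 v Ht Hv)).
Qed.
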